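(* Let $M\ge 2$ and let $T$ be a positive even integer. For $k=0,1,\dots,T/2$ put $\omega_k=2\pi k/T$. Let $A_{ijk}\ge 0$ and $\phi_{ijk}\in\mathbb{R}$ be given for $1\le i,j\le M$, $0\le k\le T/2$. For $\boldsymbol{\tau}=(\tau_1,\dots,\tau_M)\in\mathbb{R}^M$ write $\tau_{ij}=\tau_j-\tau_i$, and define $$\mathcal{J}(\boldsymbol{\tau})=\frac{1}{T}\sum_{k=0}^{T/2}\sum_{i=1}^{M}\sum_{j=1}^{M}A_{ijk}\cos(\omega_k\tau_{ij}+\phi_{ijk}).$$ For auxiliary variables $\boldsymbol{\theta}=(\theta_{ijk})$ with $\theta_{ijk}\in[-\pi,\pi]$, define $$Q(\boldsymbol{\tau},\boldsymbol{\theta})=\frac{1}{T}\sum_{k=0}^{T/2}\sum_{i=1}^{M}\sum_{j=1}^{M}\Big\{-B_{ijk}\big(\omega_k\tau_{ij}+\phi_{ijk}+2\nu_{ijk}\pi\big)^2+A_{ijk}\big(\cos\theta_{ijk}+\tfrac12\theta_{ijk}\sin\theta_{ijk}\big)\Big\},\qquad B_{ijk}=\frac{A_{ijk}}{2}\frac{\sin\theta_{ijk}}{\theta_{ijk}},$$ where $\sin\theta/\theta$ is interpreted as $1$ at $\theta=0$, and where, for the given $\boldsymbol{\tau}$, $\nu_{ijk}\in\mathbb{Z}$ is chosen such that $|\omega_k\tau_{ij}+\phi_{ijk}+2\nu_{ijk}\pi|\le\pi$. Then $Q$ is an auxiliary function for $\mathcal{J}$: $\mathcal{J}(\boldsymbol{\tau})\ge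 Q(\boldsymbol{\tau},\boldsymbol{\theta})$ for every $\boldsymbol{\tau}\in\mathbb{R}^M$ and every such $\boldsymbol{\theta}$, and $Q(\boldsymbol{\tau},\boldsymbol{\theta})=\mathcal{J}(\boldsymbol{\tau})$ holds when $\theta_{ijk}=\omega_k\tau_{ij}+\phi_{ijk}+2\nu_{ijk}\pi$ for all $i,j,k$.
   Context: This arises in time-delay estimation: $\tau_i$ are time delays (relative to a reference sensor) at $M$ sensors, and in the paper $A_{ijk}=\beta_k a_{ik}a_{jk}|V_{ijk}|$, $\phi_{ijk}=\angle V_{ijk}$, where $V_{ijk}$ are entries of the Hermitian spatial covariance matrix of the observations at frequency $k$, $a_{ik}\ge 0$ are relative amplitudes, and $\beta_0=\beta_{T/2}=1$, $\beta_k=2$ otherwise; $\mathcal{J}$ is then (up to a positive constant factor for fixed amplitudes) the multichannel cross-correlation objective. Only $A_{ijk}\ge0$ is needed for the statement. *)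

From mathcomp Require Import all_boot all_order all_algebra.
From mathcomp Require Import all_classical all_reals all_analysis.
Set Implicit Arguments. Unset Strict Implicit. Unset Printing Implicit Defensive.
Import Order.TTheory GRing.Theory Num.Theory.
Local Open Scope ring_scope.

Section Defs.
Variable R : realType.

Definition omega (T k : nat) : R := 2 * pi * k%:R / T%:R.

Definition sinc (t : R) : R := if t == 0 then 1 else sin t / t.

Variables (M T : nat).
Variables (A phi : 'I_M -> 'I_M -> 'I_(T./2).+1 -> R).

Definition phase (tau : 'I_M -> R) i j (k : 'I_(T./2).+1) : R :=
  omega T k * (tau j - tau i) + phi i j k.

Definition Jobj (tau : 'I_M -> R) : R :=
  T%:R^-1 * \sum_(k < (T./2).+1) \sum_(i < M) \sum_(j < M)
    A i j k * cos (phase tau i j k).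

Definition Bcoef (theta : 'I_M -> 'I_M -> 'I_(T./2).+1 -> R) i j k : R :=
  A i j k / 2 * sinc (theta i j k).

Definition Qaux (tau : 'I_M -> R) (theta : 'I_M -> 'I_M -> 'I_(T./2).+1 -> R)
    (nu : 'I_M -> 'I_M -> 'I_(T./2).+1 -> int) : R :=
  T%:R^-1 * \sum_(k < (T./2).+1) \sum_(i < M) \sum_(j < M)
    (- Bcoef theta i j k * (phase tau i j k + 2 * (nu i j k)%:~R * pi) ^+ 2
     + A i j k * (cos (theta i j k) + 2^-1 * theta i j k * sin (theta i j k))).
End Defs.

From mathcomp Require Import all_boot all_order all_algebra.
From mathcomp Require Import all_classical all_reals all_analysis.
From mathcomp Require Import ring lra.
Import Order.TTheory GRing.Theory Num.Theory.
Local Open Scope ring_scope.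

(* Each summand of [Qaux] minorizes the corresponding summand of [Jobj]. With
   [c = sinc theta] one has [theta sin theta / 2 = c theta^2 / 2], so the summand
   is [A (cos theta + c theta^2/2 - c y^2/2)] where [y] is the phase wrapped into
   [[-pi, pi]].  Since [sin y / y] decreases on [(0, pi]], the derivative
   [c y - sin y] of [y |-> cos y + c y^2/2] changes sign from [-] to [+] at
   [|theta|], so on [[0, pi]] this function is smallest at [|theta|]; this is
   the inequality, and [y = theta] gives equality.  Wrapping the phase does not
   change its cosine. *)

Section CosMinorant.
Context {R : realType}.
Implicit Types a b t u v x y : R.

Lemma ger0_is_derive_le (f df : R -> R) a b : a <= b ->
  (forall x, a <= x <= b -> is_derive x 1 f (df x)) ->
  (forall x, a < x < b -> 0 <= df x) -> f a <= f b.
Proof.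
move=> ab fD dfge0.
have fD_oo x : x \in `]a, b[ -> is_derive x 1 f (df x).
  by rewrite in_itv /= => /andP[ax xb]; apply: fD; rewrite !ltW.
apply: (@ger0_derive1_ndecr _ _ a b) => // [x /fD_oo[] // | x xab |].
- rewrite derive1E; case: (fD_oo x xab) => _ ->.
  by apply: dfge0; rewrite in_itv in xab.
- by apply: derivable_within_continuous => x /fD[].
Qed.

Lemma is_derive_sign_change_min (g dg : R -> R) a t b x :
  a <= t <= b -> a <= x <= b ->
  (forall y, a <= y <= b -> is_derive y 1 g (dg y)) ->
  (forall y, a < y < t -> dg y <= 0) ->
  (forall y, t < y < b -> 0 <= dg y) -> g t <= g x.
Proof.
move=> /andP[a_le_t t_le_b] /andP[ax xb] gD dg_le0 dg_ge0.
have [xt|tx] := lerP x t.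
- rewrite -lerN2; apply: (@ger0_is_derive_le (- g) (- dg)) => //.
    move=> y /andP[xy yt]; apply: is_deriveN; apply: gD.
    by rewrite (le_trans ax) // (le_trans yt).
  move=> y /andP[xy yt]; rewrite oppr_ge0; apply: dg_le0.
  by rewrite yt (le_lt_trans ax).
- apply: (@ger0_is_derive_le g dg); first exact: ltW.
    by move=> y /andP[ty yx]; apply: gD; rewrite (le_trans a_le_t) // (le_trans yx).
  by move=> y /andP[ty yx]; apply: dg_ge0; rewrite ty (lt_le_trans yx).
Qed.

Lemma is_derive_inv x : x != 0 -> is_derive x 1 (fun y : R => y^-1) (- x ^- 2).
Proof.
move=> x0; apply: DeriveDef.
  by apply: (derivableV (f := fun y : R => y)) => //; exact: derivable_id.
by rewrite (deriveV (f := fun y : R => y)) // derive_id; exact: mulr1.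
Qed.

Lemma sin_le_id x : 0 <= x -> sin x <= x.
Proof.
move=> x0; rewrite -subr_ge0.
have -> : 0 = (id - sin : R -> R) 0 by rewrite !fctE sin0 subr0.
by apply: (@ger0_is_derive_le _ (fun y => 1 - cos y)).
Qed.

Lemma mul_cos_le_sin t : 0 <= t <= pi -> t * cos t <= sin t.
Proof.
move=> /andP[t0 tpi]; rewrite -subr_ge0.
have -> : 0 = (sin - id * cos : R -> R) 0 by rewrite !fctE sin0 mul0r subr0.
apply: (@ger0_is_derive_le _ (fun y => y * sin y)) => // [y _|y /andP[y0 yt]].
  apply: is_derive_eq; rewrite scaler1 [_ *: _]mulrN; lra.
apply: mulr_ge0; first exact: ltW.
by apply: sin_ge0_pi; rewrite ltW //= (le_trans (ltW yt)).
Qed.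

Lemma sinc_mul t : sinc t * t = sin t.
Proof. by rewrite /sinc; case: eqP => [->|/eqP t0]; rewrite ?sin0 ?mulr0 ?divfK. Qed.

Lemma sincN t : sinc (- t) = sinc t.
Proof. by rewrite /sinc oppr_eq0 sinN invrN mulrNN. Qed.

Lemma sinc_norm t : sinc `|t| = sinc t.
Proof. by case: (ler0P t); rewrite ?sincN. Qed.

Lemma sinc_le u v : 0 <= u -> u <= v -> v <= pi -> sinc v <= sinc u.
Proof.
move=> u0 uv vpi; have [u_eq0|u_neq0] := eqVneq u 0.
  move: uv; rewrite u_eq0 /sinc eqxx => v_ge0; case: eqP => // /eqP v_neq0.
  have v_gt0 : 0 < v by rewrite lt_neqAle eq_sym v_neq0.
  by rewrite ler_pdivrMr // mul1r sin_le_id.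
have u_gt0 : 0 < u by rewrite lt_neqAle eq_sym u_neq0.
have v_gt0 : 0 < v := lt_le_trans u_gt0 uv.
rewrite /sinc !gt_eqF // -lerN2.
apply: (@ger0_is_derive_le (- (sin * (fun y => y^-1)))
  (fun y => (sin y - y * cos y) / y ^+ 2)) => // [y /andP[uy _]|y /andP[uy yv]].
  have y_neq0 : y != 0 by rewrite gt_eqF // (lt_le_trans u_gt0).
  have inv_D := is_derive_inv y y_neq0.
  by apply: is_derive_eq; rewrite /GRing.scale /=; field.
rewrite divr_ge0 ?sqr_ge0 // subr_ge0 mul_cos_le_sin //.
by rewrite (ltW (le_lt_trans u0 uy)) (ltW (lt_le_trans yv vpi)).
Qed.

Lemma cos_add_sinc_sqr_ge t y : 0 <= t <= pi -> 0 <= y <= pi ->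
  cos t + sinc t / 2 * t ^+ 2 <= cos y + sinc t / 2 * y ^+ 2.
Proof.
move=> /andP[t0 tpi] /andP[y0 ypi].
have := @is_derive_sign_change_min (cos + cst (sinc t / 2) * id ^+ 2)
  (fun z => sinc t * z - sin z) 0 t pi y.
rewrite !fctE; apply; rewrite ?t0 ?y0 //.
- by move=> z _; apply: is_derive_eq; rewrite /GRing.scale /=; field.
- move=> z /andP[z0 zt]; rewrite subr_le0 -[X in _ <= X]sinc_mul.
  by rewrite ler_pM2r // sinc_le ?(ltW z0) ?(ltW zt).
- move=> z /andP[tz zpi]; rewrite subr_ge0 -[X in X <= _]sinc_mul.
  by rewrite ler_pM2r ?(le_lt_trans t0 tz) // sinc_le ?(ltW tz) ?(ltW zpi).
Qed.

Definition cos_minorant a t y : R :=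
  - (a / 2 * sinc t) * y ^+ 2 + a * (cos t + 2^-1 * t * sin t).

Lemma cos_minorantE a t y :
  cos_minorant a t y = a * (cos t + sinc t / 2 * (t ^+ 2 - y ^+ 2)).
Proof. by rewrite /cos_minorant -sinc_mul; ring. Qed.

Lemma cos_minorant_id a t : cos_minorant a t t = a * cos t.
Proof. by rewrite cos_minorantE subrr mulr0 addr0. Qed.

Lemma cos_minorant_le a t y : 0 <= a -> - pi <= t <= pi -> `|y| <= pi ->
  cos_minorant a t y <= a * cos y.
Proof.
move=> a0 tpi ypi; rewrite cos_minorantE; apply: (ler_wpM2l a0).
rewrite mulrBr addrA lerBlDr.
rewrite -cos_norm -(cos_norm y) -sinc_norm.
rewrite -(real_normK (num_real t)) -(real_normK (num_real y)).
by apply: cos_add_sinc_sqr_ge; rewrite ?ypi normr_ge0 // ler_norml.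
Qed.

Lemma cosD_int2pi x (n : int) : cos (x + 2 * n%:~R * pi) = cos x.
Proof.
have cosD_nat2pi y (m : nat) : cos (y + 2 * m%:R * pi) = cos y.
  have -> : 2 * m%:R * pi = pi *+ 2 *+ m :> R.
    by rewrite -mulrnA -[pi *+ _]mulr_natl natrM.
  exact: periodicn (@cosD2pi R) m y.
case: n => m; first exact: cosD_nat2pi.
rewrite -[LHS](cosD_nat2pi _ m.+1); congr cos.
by rewrite NegzE mulrNz pmulrn; ring.
Qed.

End CosMinorant.

Theorem theorem2 (R : realType) (M T : nat) (hM : (2 <= M)%N)
  (hT0 : (0 < T)%N) (hTeven : ~~ odd T)
  (A phi : 'I_M -> 'I_M -> 'I_(T./2).+1 -> R)
  (hA : forall i j k, 0 <= A i j k)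
  (tau : 'I_M -> R) (theta : 'I_M -> 'I_M -> 'I_(T./2).+1 -> R)
  (htheta : forall i j k, - pi <= theta i j k <= pi)
  (nu : 'I_M -> 'I_M -> 'I_(T./2).+1 -> int)
  (hnu : forall i j k, `|phase phi tau i j k + 2 * (nu i j k)%:~R * pi| <= pi) :
  Qaux A phi tau theta nu <= Jobj A phi tau /\
  ((forall i j k, theta i j k = phase phi tau i j k + 2 * (nu i j k)%:~R * pi) ->
   Qaux A phi tau theta nu = Jobj A phi tau).
Proof.
(* The comparison is summand by summand. *)
rewrite /Qaux /Jobj /Bcoef; split.
  rewrite ler_wpM2l ?invr_ge0 ?ler0n //.
  apply: ler_sum => k _; apply: ler_sum => i _; apply: ler_sum => j _.
  rewrite -(cosD_int2pi (phase phi tau i j k) (nu i j k)).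
  exact: cos_minorant_le.
move=> theta_wrapped; congr (_ * _).
apply: eq_bigr => k _; apply: eq_bigr => i _; apply: eq_bigr => j _.
rewrite -(cosD_int2pi (phase phi tau i j k) (nu i j k)) -theta_wrapped.
exact: cos_minorant_id.
Qed.
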